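(* Let $m=n+1$. Then every instance with $n$ agents with monotone valuations and $m$ goods has at least $n$ EFX allocations, and there exists an instance with $n$ agents with additive valuations and $m$ goods that has exactly $n$ EFX allocations. *)

From HB Require Import structures.
From mathcomp Require Import all_boot all_order all_algebra.
Set Implicit Arguments. Unset Strict Implicit. Unset Printing Implicit Defensive.
Import Order.TTheory GRing.Theory Num.Theory.
Local Open Scope ring_scope.

(* agents are 'I_n, goods are 'I_m; valuations take values in a real field R *)
Definition valuations (R : realFieldType) (n m : nat) := 'I_n -> {set 'I_m} -> R.

Definition monotone_vals (R : realFieldType) n m (v : valuations R n m) : Prop :=
  forall i, v i set0 = 0 /\ forall S T : {set 'I_m}, S \subset T -> v i S <= v i T.

Definition additive_vals (R : realFieldType) n m (v : valuations R n m) : Prop :=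
  exists w : 'I_n -> 'I_m -> R,
    (forall i g, 0 <= w i g) /\
    forall i (S : {set 'I_m}), v i S = \sum_(g in S) w i g.

(* a (complete) allocation assigns each good to exactly one agent *)
Definition allocation n m := {ffun 'I_m -> 'I_n}.

Definition bundle n m (a : allocation n m) (i : 'I_n) : {set 'I_m} :=
  [set g | a g == i].

Definition EFX (R : realFieldType) n m (v : valuations R n m) (a : allocation n m) : bool :=
  [forall i : 'I_n, forall j : 'I_n, forall g : 'I_m,
     (g \in bundle a j) ==> (v i (bundle a j :\ g) <= v i (bundle a i))].

Definition num_EFX (R : realFieldType) n m (v : valuations R n m) : nat :=
  #|[set a : allocation n m | EFX v a]|.

From mathcomp Require Import all_boot all_order all_algebra.
From mathcomp Require Import zify lra.
Set Implicit Arguments.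
Unset Strict Implicit.
Unset Printing Implicit Defensive.

Import Order.TTheory GRing.Theory Num.Theory.
Local Open Scope ring_scope.

(* Lower bound: for each agent j, let the other n - 1 agents choose their
   favourite good one after another (serial dictatorship) and give the two
   remaining goods to j.  Every other agent holds one good, chosen while both
   of j's goods were still available, so the allocation is EFX; the agent with
   two goods distinguishes these n allocations.

   Upper bound: each agent i has its own good, worth more than all other goods
   together, plus a common extra good worth 2 against 1 for the rest.  In an
   EFX allocation, whoever takes another agent's own good must hold nothing
   else; a counting argument then shows that the owner of the extra good keeps
   its own good, and an agent holding a single foreign good (worth 1 to it)
   would envy that owner's bundle minus its own good (containing the extra
   good, worth 2).  So every agent keeps its own good, and an EFX allocation
   is determined by the owner of the extra good. *)

Section SerialDictatorship.
Context {disp : Order.disp_t} {V : orderType disp} {I T : finType}.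
Variable u : I -> T -> V.
Local Open Scope order_scope.

Lemma serial_dictatorship (A : {set I}) (G : {set T}) : (#|A| < #|G|)%N ->
  exists2 f : I -> T, {in A &, injective f} &
    f @: A \subset G /\ {in A & G :\: f @: A, forall x g, u x g <= u x (f x)}.
Proof.
elim: {A}#|A| {-2}A (erefl #|A|) G => [|k IH] A cardA G ltAG.
  have /card_gt0P[g0 _] : (0 < #|G|)%N by apply: leq_ltn_trans ltAG.
  have A0 := cards0_eq cardA; exists (fun=> g0) => [x|]; first by rewrite A0 inE.
  by rewrite A0 imset0 sub0set; split=> // x; rewrite inE.
have /card_gt0P[x xA] : (0 < #|A|)%N by rewrite cardA.
have /card_gt0P[g0 g0G] : (0 < #|G|)%N by apply: leq_ltn_trans ltAG.
case: (arg_maxP (u x) g0G) => gm gmG gm_max.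
have {}gmG : gm \in G := gmG.
have [f' f'inj [f'G f'pref]] : exists2 f' : I -> T, {in A :\ x &, injective f'} &
    f' @: (A :\ x) \subset G :\ gm /\
    {in A :\ x & G :\ gm :\: f' @: (A :\ x), forall y g, u y g <= u y (f' y)}.
  apply: IH; first by move: cardA; rewrite (cardsD1 x) xA => -[].
  by move: ltAG; rewrite (cardsD1 x A) (cardsD1 gm G) xA gmG.
have f'_neq y : y \in A :\ x -> f' y != gm.
  by move=> yA; have := subsetP f'G _ (imset_f f' yA); rewrite !inE => /andP[].
pose f y := if y == x then gm else f' y.
have fA : f @: A = gm |: f' @: (A :\ x).
  rewrite -{1}(setD1K xA) imsetU1 /f eqxx; congr (_ |: _).
  by apply: eq_in_imset => y; rewrite !inE => /andP[/negbTE ->].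
exists f => [y z yA zA|].
  rewrite /f; case: (eqVneq y x) => [->|yx]; case: (eqVneq z x) => [->|zx] //.
  - by move=> gmz; have := f'_neq z; rewrite -gmz eqxx !inE zx zA => /(_ isT).
  - by move=> ygm; have := f'_neq y; rewrite ygm eqxx !inE yx yA => /(_ isT).
  - by apply: f'inj; rewrite !inE ?yx ?zx.
rewrite fA -setDDl; split.
  by rewrite subUset sub1set gmG (subset_trans f'G) // subD1set.
move=> y g yA gG; rewrite /f; case: (eqVneq y x) => [-> | yx].
  by apply: gm_max; move: gG; rewrite !inE => /and3P[].
by apply: f'pref; rewrite // !inE yx.
Qed.

End SerialDictatorship.

Lemma EFXP (R : realFieldType) n m (v : valuations R n m) (a : allocation n m) :
  reflect (forall i j g, g \in bundle a j -> v i (bundle a j :\ g) <= v i (bundle a i))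
          (EFX v a).
Proof.
apply: (iffP forallP) => [efx i j g gj | efx i].
  by have /forallP/(_ j)/forallP/(_ g)/implyP := efx i; apply.
by apply/forallP=> j; apply/forallP=> g; apply/implyP; apply: efx.
Qed.

Lemma monotone_vals_ge0 (R : realFieldType) n m (v : valuations R n m) i S :
  monotone_vals v -> 0 <= v i S.
Proof. by case/(_ i)=> v0 mono; rewrite -v0 mono ?sub0set. Qed.

Lemma ler_sum_subset (R : numDomainType) (T : finType) (w : T -> R) (S U : {set T}) :
  (forall g, 0 <= w g) -> S \subset U -> \sum_(g in S) w g <= \sum_(g in U) w g.
Proof.
move=> w_ge0 SU; rewrite [leRHS](big_setID S) /= (setIidPr SU) lerDl.
by apply: sumr_ge0.
Qed.

Lemma additive_monotone (R : realFieldType) n m (v : valuations R n m) :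
  additive_vals v -> monotone_vals v.
Proof.
case=> w [w_ge0 vE] i; rewrite !vE big_set0; split=> // S U SU.
by rewrite !vE ler_sum_subset.
Qed.

Definition complete_alloc n m (f : 'I_n -> 'I_m) (j : 'I_n) : allocation n m :=
  [ffun g => odflt j [pick k in [set~ j] | f k == g]].

Lemma bundle_complete_alloc n m (f : 'I_n -> 'I_m) j :
  bundle (complete_alloc f j) j = ~: (f @: [set~ j]).
Proof.
apply/setP=> g; rewrite !inE ffunE; case: pickP => [k /andP[kj /eqP <-] | none] /=.
  by rewrite imset_f //; move: kj; rewrite !inE => /negbTE.
rewrite eqxx; apply/esym/imsetP=> -[k kj gk].
by have := none k; rewrite kj gk eqxx.
Qed.

Lemma bundle_complete_alloc_neq n m (f : 'I_n -> 'I_m) j k :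
  {in [set~ j] &, injective f} -> k != j -> bundle (complete_alloc f j) k = [set f k].
Proof.
move=> finj kj; apply/setP=> g; rewrite !inE ffunE.
case: pickP => [k' /andP[k'j /eqP <-] | none] /=.
  by apply/eqP/eqP=> [-> // | /finj]; apply; rewrite // !inE.
have := none k; rewrite !inE kj /= => /negbT fk_neq.
by rewrite eq_sym (negbTE kj) eq_sym (negbTE fk_neq).
Qed.

Section LowerBound.
Variables (R : realFieldType) (n : nat) (v : valuations R n n.+1).
Hypothesis v_mono : monotone_vals v.

Lemma exists_EFX_two_goods_to (j : 'I_n) : exists a : allocation n n.+1,
  [/\ EFX v a, #|bundle a j| = 2%N & {in [set~ j], forall k, #|bundle a k| = 1%N}].
Proof.
have [|f finj [_ fpref]] :=
  serial_dictatorship (fun i g => v i [set g]) (A := [set~ j]) (G := setT).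
  by rewrite cardsC1 cardsT !card_ord; lia.
set a := complete_alloc f j.
have Bj : bundle a j = ~: f @: [set~ j] := bundle_complete_alloc f j.
have Bk k : k != j -> bundle a k = [set f k] := bundle_complete_alloc_neq finj.
have card_Bj : #|bundle a j| = 2%N.
  have := cardsC (f @: [set~ j]); rewrite -Bj (card_in_imset finj) cardsC1 !card_ord.
  by have := ltn_ord j; lia.
exists a; split=> //; last by move=> k; rewrite !inE => kj; rewrite Bk // cards1.
apply/EFXP=> i k g; have [-> gj | kj] := eqVneq k j; last first.
  rewrite Bk // inE => /eqP ->.
  by rewrite setDv (v_mono i).1 monotone_vals_ge0.
have [-> | ij] := eqVneq i j; first by rewrite (v_mono j).2 ?subD1set.
have /cards1P[g' Bjg] : #|bundle a j :\ g| == 1%N.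
  by move: card_Bj; rewrite (cardsD1 g) gj add1n => -[->].
have g'_left : g' \in setT :\: f @: [set~ j].
  by rewrite setTD -Bj; apply: (subsetP (subD1set _ g)); rewrite Bjg set11.
by rewrite Bjg Bk //; apply: fpref; rewrite // !inE.
Qed.

Lemma num_EFX_ge : (n <= num_EFX v)%N.
Proof.
have [A /all_and3 [A_EFX A_pair A_single]] := fin_all_exists exists_EFX_two_goods_to.
have A_inj : injective A.
  move=> j1 j2 A12; apply/eqP; apply: contraT => j12.
  by have := A_single j1 j2; rewrite !inE eq_sym j12 A12 A_pair => /(_ isT).
rewrite /num_EFX -{1}(card_ord n) -(card_imset _ A_inj) subset_leq_card //.
by apply/subsetP=> _ /imsetP[j _ ->]; rewrite inE.
Qed.

End LowerBound.

Section TightInstance.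
Variables (R : realFieldType) (n : nat).

(* Agent [i]'s own good is [lift ord_max i]; its weight exceeds the total
   weight of the other [n] goods, each of which is at most 2. *)
Local Notation own := (lift (@ord_max n)).

Definition tight_weight (i : 'I_n) (g : 'I_n.+1) : R :=
  if g == own i then 2 *+ n.+1 else if g == ord_max then 2 else 1.

Definition tight_vals : valuations R n n.+1 :=
  fun i S => \sum_(g in S) tight_weight i g.

Lemma tight_weight_ge0 i g : 0 <= tight_weight i g.
Proof.
by rewrite /tight_weight; case: ifP => _; [|case: ifP => _];
  rewrite ?ler0n ?ler01 ?mulrn_wge0.
Qed.

Lemma tight_vals_additive : additive_vals tight_vals.
Proof. by exists tight_weight; split=> //; apply: tight_weight_ge0. Qed.

Lemma tight_weight_le_vals i g (S : {set 'I_n.+1}) :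
  g \in S -> tight_weight i g <= tight_vals i S.
Proof.
move=> gS; have := ler_sum_subset (tight_weight_ge0 i) (_ : [set g] \subset S).
by rewrite big_set1 sub1set; apply.
Qed.

Lemma tight_vals_lt i (S : {set 'I_n.+1}) : own i \notin S -> tight_vals i S < 2 *+ n.+1.
Proof.
move=> iS; have S_sub : S \subset [set~ own i].
  by apply/subsetP=> g gS; rewrite !inE; apply: contraNneq iS => <-.
apply: le_lt_trans (ler_sum_subset (tight_weight_ge0 i) S_sub) _.
apply: le_lt_trans (_ : \sum_(g in [set~ own i]) 2 < _).
  apply: ler_sum => g; rewrite !inE /tight_weight => /negbTE ->.
  by case: ifP; rewrite ?ler1n.
by rewrite sumr_const cardsC1 card_ord /= [in ltRHS]mulrS ltrDr ltr0n.
Qed.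

Section EFXAllocation.
Variable a : allocation n n.+1.
Hypothesis a_EFX : EFX tight_vals a.

Lemma bundle_taker_own (i : 'I_n) :
  a (own i) != i -> bundle a (a (own i)) = [set own i].
Proof.
move=> taken; apply/setP=> h; rewrite !inE; apply/eqP/eqP=> [ah | ->] //.
apply/eqP; apply: contraT => h_neq; have /EFXP efx := a_EFX.
have own_lost : tight_vals i (bundle a i) < 2 *+ n.+1 by rewrite tight_vals_lt ?inE.
have own_kept : 2 *+ n.+1 <= tight_vals i (bundle a (a (own i)) :\ h).
  have := @tight_weight_le_vals i (own i) (bundle a (a (own i)) :\ h).
  by rewrite /tight_weight eqxx !inE eq_sym h_neq eqxx; apply.
have := efx i (a (own i)) h; rewrite inE ah eqxx => /(_ isT) no_envy.
by have := lt_le_trans own_lost (le_trans own_kept no_envy); rewrite ltxx.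
Qed.

Lemma extra_owner_keeps_own : a (own (a ord_max)) = a ord_max.
Proof.
(* The takers of own goods map [S] injectively into itself, hence onto [S]:
   every agent of [S] holds a single own good, so not [ord_max]. *)
pose S := [set i | a (own i) != i]; pose f i := a (own i).
have fS : {in S, forall i, f i \in S}.
  move=> i; rewrite !inE => iS; apply/eqP=> fi.
  have : own (f i) \in bundle a (f i) by rewrite inE fi.
  rewrite bundle_taker_own // inE => /eqP/(@lift_inj _ ord_max) fi_i.
  by move: iS; rewrite -/(f i) fi_i eqxx.
have finj : {in S &, injective f}.
  move=> i i'; rewrite !inE => iS i'S fii'.
  apply: (@lift_inj _ ord_max); apply: set1_inj.
  by rewrite -(bundle_taker_own iS) -(bundle_taker_own i'S) -/(f i) -/(f i') fii'.
have fS_eq : f @: S = S.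
  apply/eqP; rewrite eqEcard card_in_imset // leqnn andbT.
  by apply/subsetP=> _ /imsetP[i iS ->]; apply: fS.
apply/eqP; apply: contraT => jS.
have /imsetP[i] : a ord_max \in f @: S by rewrite fS_eq /S inE.
rewrite /S inE => taken j_eq.
have : ord_max \in bundle a (f i) by rewrite inE -j_eq.
by rewrite bundle_taker_own // inE (negbTE (neq_lift _ _)).
Qed.

Lemma EFX_tight_own (i : 'I_n) : a (own i) = i.
Proof.
apply/eqP; apply: contraT => taken; have /EFXP efx := a_EFX.
set k := a (own i); set j := a ord_max.
have own_bundle : tight_vals k (bundle a k) = 1.
  rewrite bundle_taker_own // /tight_vals big_set1 /tight_weight.
  have -> : (own i == own k) = false.
    by apply: contraNF taken => /eqP/(@lift_inj _ ord_max) {2}->.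
  by rewrite eq_sym (negbTE (neq_lift _ _)).
have extra_good : 2 <= tight_vals k (bundle a j :\ own j).
  have := @tight_weight_le_vals k ord_max (bundle a j :\ own j).
  rewrite /tight_weight (negbTE (neq_lift ord_max k)) eqxx !inE.
  by rewrite (negbTE (neq_lift ord_max j)) eqxx; apply.
have := efx k j (own j); rewrite inE extra_owner_keeps_own eqxx => /(_ isT) no_envy.
by have := le_trans extra_good no_envy; rewrite own_bundle; lra.
Qed.

End EFXAllocation.

Lemma num_EFX_tight_le : (num_EFX tight_vals <= n)%N.
Proof.
have extra_inj : {in [set a | EFX tight_vals a] &,
    injective (fun a : allocation n n.+1 => a ord_max)}.
  move=> a b; rewrite !inE => a_EFX b_EFX ab; apply/ffunP=> g.
  by case: (unliftP ord_max g) => [i ->|->] //; rewrite !EFX_tight_own.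
rewrite /num_EFX -(card_in_imset extra_inj).
by apply: leq_trans (max_card _) _; rewrite card_ord.
Qed.

End TightInstance.

Theorem proposition4 (R : realFieldType) (n m : nat) (hm : m = n.+1) :
  (forall v : valuations R n m, monotone_vals v -> (n <= num_EFX v)%N) /\
  (exists v : valuations R n m, additive_vals v /\ num_EFX v = n).
Proof.
subst m; split=> [v v_mono|]; first exact: num_EFX_ge.
exists (@tight_vals R n); split; first exact: tight_vals_additive.
apply/eqP; rewrite eqn_leq num_EFX_tight_le num_EFX_ge //.
exact/additive_monotone/tight_vals_additive.
Qed.
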